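(* Let $d\ge3$ and let $(X_{t,1},\dots,X_{t,d})$, $t=1,\dots,T$, be i.i.d. binary random vectors, each following a determinantal point process with correlation kernel $K_0^*$, where $K_0^*$ is real symmetric with all eigenvalues in $(0,1)$, all entries of $K_0^*$ are nonzero, and $K^*_{0,1i}>0$ for $i=2,\dots,d$. Define the estimator $\widehat{K^*_T}$ (a symmetric matrix) by $\widehat{K^*_{ii}}=\frac1T\sum_{t=1}^T X_{t,i}$; for $i<j$, $\widehat{|K^*_{ij}|}=\sqrt{-\widehat{\mathrm{Cov}}(X_i,X_j)}$ with $-\widehat{\mathrm{Cov}}(X_i,X_j)=\widehat{K^*_{ii}}\widehat{K^*_{jj}}-\frac1T\sum_{t=1}^T X_{t,i}X_{t,j}$; $\widehat{K^*_{1j}}=\widehat{|K^*_{1j}|}$ for $j\ge2$; for $1<i<j\le d$, $\widehat{K^*_{ij}}=\widehat{\mathrm{sgn}}_{ij}\cdot\widehat{|K^*_{ij}|}$, where $$\widehat{\mathrm{sgn}}_{ij}=\mathrm{sgn}\Big(\tfrac1T\textstyle\sum_{t}X_{t,1}X_{t,i}X_{t,j}-\widehat{K^*_{11}}\widehat{K^*_{ii}}\widehat{K^*_{jj}}+\widehat{K^*_{11}}\widehat{|K^*_{ij}|}^2+\widehat{K^*_{ii}}\widehat{|K^*_{1j}|}^2+\widehat{K^*_{jj}}\widehat{|K^*_{1i}|}^2\Big);$$ and $\widehat{K^*_{ji}}=\widehat{K^*_{ij}}$. Then $\widehat{K^*_T}\to K_0^*$ almost surely as $T\to\infty$. In particular,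 almost surely, for all $T$ large enough: $-\widehat{\mathrm{Cov}}(X_i,X_j)\ge0$ for all $i<j$ (so $\widehat{|K^*_{ij}|}$ is well defined), and $\mathrm{sgn}(\widehat{K^*_{ij}})=\mathrm{sgn}(K^*_{0,ij})$ for all $i,j$.
   Context: A binary random vector $(X_1,\dots,X_d)$ follows a determinantal point process with correlation kernel $K$ if $\mathbb{P}[X_j=1\ \forall j\in s]=\det K_s$ for every $s\subseteq\{1,\dots,d\}$, where $K_s$ is the principal submatrix of $K$ with rows and columns in $s$. $\mathrm{sgn}(x)$ is $1,-1,0$ according as $x>0$, $x<0$, $x=0$. For finitely many $T$ the defining expressions may be undefined (negative quantity under a square root, or zero sign); the value of the estimator on that event is fixed by an arbitrary convention and plays no role in the statement. *)

From HB Require Import structures.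
From mathcomp Require Import all_boot all_order all_algebra.
From mathcomp Require Import all_classical all_reals all_analysis.
Set Implicit Arguments. Unset Strict Implicit. Unset Printing Implicit Defensive.
Import Order.TTheory GRing.Theory Num.Theory.
Local Open Scope classical_set_scope.
Local Open Scope ring_scope.

Definition principal_minor (R : comRingType) (d : nat) (K : 'M[R]_d)
  (s : {set 'I_d}) : R :=
  \det (\matrix_(a < #|s|, b < #|s|) K (enum_val a) (enum_val b)).

Definition is_DPP (R : realType) (dT : measure_display) (Omega : measurableType dT)
  (P : probability Omega R) (d : nat) (K : 'M[R]_d) (Y : Omega -> 'I_d -> bool) :=
  forall s : {set 'I_d},
    P [set w | forall j, j \in s -> Y w j] = (principal_minor K s)%:E.

Definition mutually_independent (R : realType) (dT : measure_display)
  (Omega : measurableType dT) (P : probability Omega R) (d : nat)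
  (X : nat -> Omega -> 'I_d -> bool) :=
  forall (s : seq nat) (A : nat -> set ('I_d -> bool)), uniq s ->
    fine (P (\big[setI/setT]_(t <- s) (X t @^-1` A t)))
    = \prod_(t <- s) fine (P (X t @^-1` A t)).

Section Estimator.
Variables (R : realType) (Omega : Type) (d : nat).
Variable X : nat -> Omega -> 'I_d -> bool.

(* the sample uses X 0, ..., X (T-1) *)
Definition mean1 (T : nat) (w : Omega) (i : 'I_d) : R :=
  (\sum_(t < T) (X t w i)%:R) / T%:R.
Definition mean2 (T : nat) (w : Omega) (i j : 'I_d) : R :=
  (\sum_(t < T) (X t w i && X t w j)%:R) / T%:R.
Definition mean3 (T : nat) (w : Omega) (i j k : 'I_d) : R :=
  (\sum_(t < T) [&& X t w i, X t w j & X t w k]%:R) / T%:R.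

Definition negcov T w i j : R := mean1 T w i * mean1 T w j - mean2 T w i j.

(* \hat |K_ij| (Num.sqrt of a negative number is 0: arbitrary convention) *)
Definition absK T w i j : R := Num.sqrt (negcov T w i j).

(* \hat sgn_ij, using the index 0 (= the paper's index 1) *)
Definition sgnhat (i0 : 'I_d) T w (i j : 'I_d) : R :=
  Num.sg (mean3 T w i0 i j - mean1 T w i0 * mean1 T w i * mean1 T w j
          + mean1 T w i0 * absK T w i j ^+ 2
          + mean1 T w i * absK T w i0 j ^+ 2
          + mean1 T w j * absK T w i0 i ^+ 2).

Definition Kupper T w (i j : 'I_d) : R :=
  if val i == 0%N then absK T w i j
  else sgnhat (Ordinal (leq_ltn_trans (leq0n i) (ltn_ord i))) T w i j * absK T w i j.

Definition Khat T w : 'M[R]_d :=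
  \matrix_(i, j) (if i == j then mean1 T w i
                  else if (val i < val j)%N then Kupper T w i j
                  else Kupper T w j i).
End Estimator.

From HB Require Import structures.
From mathcomp Require Import all_boot all_order all_algebra.
From mathcomp Require Import all_classical all_reals all_analysis.
From mathcomp Require Import ring lra.
Import Order.TTheory GRing.Theory Num.Theory.
Import numFieldTopology.Exports numFieldNormedType.Exports.
Set Implicit Arguments. Unset Strict Implicit. Unset Printing Implicit Defensive.
Local Open Scope classical_set_scope.
Local Open Scope ring_scope.

(* The entries of the estimator are continuous functions of the empirical
   frequencies of the events {X_j = 1 for all j in s}, |s| <= 3, whose
   probabilities are the principal minors det K_s.  These frequencies converge
   almost surely by the strong law of large numbers for i.i.d. Bernoulli
   sequences, obtained from the fourth-moment bound E (S_n - n p)^4 <= 3 n^2,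
   Markov's inequality and Borel-Cantelli.  Hence -Cov(X_i, X_j) tends to
   K_ij^2, and the statistic inside sgn_ij tends to
   det K_{1ij} - K_11 K_ii K_jj + K_11 K_ij^2 + K_ii K_1j^2 + K_jj K_1i^2
   = 2 K_1i K_ij K_1j, which has the sign of K_ij because the first row of K
   is positive.  All limits being nonzero, the signs eventually stabilise. *)

Lemma prodr_exp_count (R : comPzSemiRingType) (I : finType) (r : seq I) (F : I -> R) :
  \prod_i F i ^+ count_mem i r = \prod_(i <- r) F i.
Proof.
rewrite -[RHS]prodr_undup_exp_count (big_uniq _ (undup_uniq r)).
rewrite [LHS](bigID (mem r)) /= [X in _ * X]big1 ?mulr1.
  by apply: eq_bigl => i; rewrite mem_undup.
by move=> i /count_memPn ->.
Qed.

Definition paired (I : eqType) (a b c e : I) : bool :=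
  [|| (a == b) && (c == e), (a == c) && (b == e) | (a == e) && (b == c)].

Lemma paired_of_no_singleton (I : eqType) (a b c e : I) :
  (forall t, count_mem t [:: a; b; c; e] != 1%N) -> paired a b c e.
Proof.
move=> H; move: (H a) (H b) (H c) (H e); rewrite /paired /= !eqxx.
rewrite [b == a]eq_sym [c == a]eq_sym [c == b]eq_sym.
rewrite [e == a]eq_sym [e == b]eq_sym [e == c]eq_sym.
case: (a =P b) => ab; case: (a =P c) => ac; case: (a =P e) => ae;
  case: (b =P c) => bc; case: (b =P e) => be; case: (c =P e) => ce //=; congruence.
Qed.

Lemma expand_exp4 (R : comPzSemiRingType) (I : finType) (F : I -> R) :
  (\sum_i F i) ^+ 4 = \sum_a \sum_b \sum_c \sum_e \prod_(i <- [:: a; b; c; e]) F i.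
Proof.
rewrite !exprS expr0 mulr1 mulr_suml; apply: eq_bigr => a _.
rewrite mulr_suml mulr_sumr; apply: eq_bigr => b _.
rewrite mulr_suml !mulr_sumr; apply: eq_bigr => c _.
rewrite !mulr_sumr; apply: eq_bigr => e _.
by rewrite !big_cons big_nil mulr1.
Qed.

Section BernoulliMoments.
Variables (R : realFieldType) (p : R).
Hypotheses (p_ge0 : 0 <= p) (p_le1 : p <= 1).

Definition bernoulli_mass (b : bool) : R := if b then p else 1 - p.
Definition centered (b : bool) : R := b%:R - p.
Definition product_mass n (z : {ffun 'I_n -> bool}) : R :=
  \prod_(t < n) bernoulli_mass (z t).
Definition centered_moment k : R := \sum_b bernoulli_mass b * centered b ^+ k.

Lemma bernoulli_mass_ge0 b : 0 <= bernoulli_mass b.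
Proof. by case: b; rewrite /= ?subr_ge0. Qed.

Lemma product_mass_ge0 n (z : {ffun 'I_n -> bool}) : 0 <= product_mass z.
Proof. by apply: prodr_ge0 => t _; exact: bernoulli_mass_ge0. Qed.

Lemma expect_prod n (h : 'I_n -> bool -> R) :
  \sum_(z : {ffun 'I_n -> bool}) product_mass z * \prod_t h t (z t)
  = \prod_t \sum_b bernoulli_mass b * h t b.
Proof. by rewrite bigA_distr_bigA; apply: eq_bigr => z _; rewrite -big_split. Qed.

Lemma sum_centered n (z : 'I_n -> bool) :
  \sum_(t < n) centered (z t) = \sum_(t < n) (z t)%:R - n%:R * p.
Proof. by rewrite sumrB sumr_const card_ord mulr_natl. Qed.

Lemma centered_moment1 : centered_moment 1 = 0.
Proof. by rewrite /centered_moment big_bool /= /centered /=; ring. Qed.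

Lemma norm_centered_le1 b : `|centered b| <= 1.
Proof.
rewrite /centered; case: b => /=.
  by rewrite ger0_norm ?subr_ge0 // gerBl.
by rewrite sub0r normrN ger0_norm.
Qed.

Lemma norm_centered_moment_le1 k : `|centered_moment k| <= 1.
Proof.
rewrite /centered_moment big_bool /=; apply: le_trans (ler_normD _ _) _.
have bound b : `|bernoulli_mass b * centered b ^+ k| <= bernoulli_mass b.
  rewrite normrM normrX ger0_norm ?bernoulli_mass_ge0 // ler_piMr ?bernoulli_mass_ge0 //.
  by rewrite exprn_ile1 ?norm_centered_le1.
by apply: le_trans (lerD (bound true) (bound false)) _; rewrite /= addrC subrK.
Qed.

Definition pairing_weight (I : eqType) (a b c e : I) : R :=
  (a == b)%:R * (c == e)%:R + (a == c)%:R * (b == e)%:R + (a == e)%:R * (b == c)%:R.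

Lemma pairing_weight_ge1 (I : eqType) (a b c e : I) :
  paired a b c e -> 1 <= pairing_weight a b c e.
Proof.
rewrite /pairing_weight -!natrM -!natrD ler1n.
by case/or3P => /andP[/eqP-> /eqP->]; rewrite !eqxx /= !addn_gt0 ?orbT.
Qed.

Lemma expect_centered_prod4 n (a b c e : 'I_n) :
  \sum_(z : {ffun 'I_n -> bool})
     product_mass z * \prod_(i <- [:: a; b; c; e]) centered (z i)
  <= pairing_weight a b c e.
Proof.
have -> : \sum_(z : {ffun 'I_n -> bool})
     product_mass z * \prod_(i <- [:: a; b; c; e]) centered (z i)
   = \prod_t centered_moment (count_mem t [:: a; b; c; e]).
  rewrite -expect_prod; apply: eq_bigr => z _.
  by rewrite -prodr_exp_count.
have weight_ge0 : 0 <= pairing_weight a b c e by rewrite !addr_ge0 ?mulr_ge0.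
have [abce|unpaired] := boolP (paired a b c e).
  apply: le_trans (ler_norm _) _; rewrite normr_prod.
  apply: le_trans (_ : 1 <= _).
    by apply: prodr_ile1 => t _; rewrite normr_ge0 norm_centered_moment_le1.
  exact: pairing_weight_ge1.
have /existsP[t /eqP single] : [exists t, count_mem t [:: a; b; c; e] == 1%N].
  apply: contraNT unpaired => /existsPn none.
  by apply: paired_of_no_singleton => t; exact: none.
by rewrite (bigD1 t) // single centered_moment1 /= mul0r.
Qed.

Lemma sum_pairing_weight n :
  \sum_(a < n) \sum_(b < n) \sum_(c < n) \sum_(e < n) pairing_weight a b c e
  = 3 * n%:R ^+ 2.
Proof.
have sum_delta (x : 'I_n) : \sum_(y < n) (x == y)%:R = 1 :> R.
  by rewrite (bigD1 x) //= eqxx big1 ?addr0 // => y; rewrite eq_sym => /negbTE ->.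
have sum_e a b c : \sum_(e < n) pairing_weight a b c e
    = (a == b)%:R + (a == c)%:R + (b == c)%:R.
  rewrite !big_split /= -[X in X + _ + _]mulr_sumr -[X in _ + X + _]mulr_sumr.
  by rewrite -[X in _ + X]mulr_suml !sum_delta !mulr1 mul1r.
have sum_c a b : \sum_(c < n) \sum_(e < n) pairing_weight a b c e
    = (a == b)%:R *+ n + 1 + 1.
  by rewrite (eq_bigr _ (fun c _ => sum_e a b c)) !big_split /= sumr_const card_ord
     !sum_delta.
rewrite (eq_bigr _ (fun a _ => eq_bigr _ (fun b _ => sum_c a b))).
under eq_bigr do rewrite !big_split /= sumrMnl sum_delta sumr_const card_ord.
by rewrite sumr_const card_ord -mulr_natr; ring.
Qed.

Lemma fourth_moment_le n :
  \sum_(z : {ffun 'I_n -> bool}) product_mass z * (\sum_(t < n) centered (z t)) ^+ 4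
  <= 3 * n%:R ^+ 2.
Proof.
have pull (G : {ffun 'I_n -> bool} -> 'I_n -> R) :
    \sum_z product_mass z * \sum_(a < n) G z a
    = \sum_(a < n) \sum_z product_mass z * G z a.
  by under eq_bigr do rewrite mulr_sumr; exact: exchange_big.
under eq_bigr do rewrite expand_exp4.
rewrite -sum_pairing_weight pull; apply: ler_sum => a _.
rewrite pull; apply: ler_sum => b _.
rewrite pull; apply: ler_sum => c _.
rewrite pull; apply: ler_sum => e _.
exact: expect_centered_prod4.
Qed.

Lemma deviation_mass_le n (eps : R) : 0 < eps -> (0 < n)%N ->
  \sum_(z : {ffun 'I_n -> bool} | eps * n%:R <= `|\sum_(t < n) centered (z t)|)
     product_mass z
  <= 3 / eps ^+ 4 / n%:R ^+ 2.
Proof.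
move=> eps_gt0 n_gt0; set c := (eps * n%:R) ^+ 4.
have c_gt0 : 0 < c by rewrite exprn_gt0 // mulr_gt0 // ltr0n.
apply: le_trans (_ : \sum_z product_mass z * ((\sum_t centered (z t)) ^+ 4 / c) <= _).
  rewrite big_mkcond /=; apply: ler_sum => z _.
  have pow4_norm : (\sum_t centered (z t)) ^+ 4 = `|\sum_t centered (z t)| ^+ 4.
    by rewrite -normrX ger0_norm // exprn_even_ge0.
  case: ifP => [dev|_]; last first.
    by rewrite mulr_ge0 ?product_mass_ge0 // divr_ge0 ?exprn_even_ge0 ?ltW.
  rewrite ler_peMr ?product_mass_ge0 // ler_pdivlMr // mul1r pow4_norm.
  apply: lerXn2r; rewrite // nnegrE ?normr_ge0 //.
  exact: mulr_ge0 (ltW eps_gt0) (ler0n _ _).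
under eq_bigr do rewrite mulrA.
rewrite -mulr_suml ler_pdivrMr //.
suff -> : 3 / eps ^+ 4 / n%:R ^+ 2 * c = 3 * n%:R ^+ 2 by exact: fourth_moment_le.
by rewrite /c; field; rewrite !gt_eqF ?ltr0n.
Qed.

End BernoulliMoments.

Lemma measure_big_setU_le d (T : measurableType d) (R : realType)
    (mu : {measure set T -> \bar R}) (I : Type) (s : seq I) (Q : pred I)
    (F : I -> set T) :
  (forall i, Q i -> measurable (F i)) ->
  (mu (\big[setU/set0]_(i <- s | Q i) F i) <= \sum_(i <- s | Q i) mu (F i))%E.
Proof.
elim: s => [|i s IHs] F_meas; first by rewrite !big_nil measure0.
rewrite !big_cons; case: ifP => Qi; last exact: IHs.
apply: le_trans (measureU2 _ _ _) _; first exact: F_meas.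
  exact: bigsetU_measurable.
by rewrite leeD2l ?IHs.
Qed.

Lemma sum_inv_sqr_le2 (R : realFieldType) N : \sum_(k < N) (k.+1%:R ^+ 2)^-1 <= 2 :> R.
Proof.
have step k : (k.+1%:R ^+ 2)^-1 <= 2 / k.+1%:R - 2 / k.+2%:R :> R.
  rewrite -subr_ge0.
  have -> : 2 / k.+1%:R - 2 / k.+2%:R - (k.+1%:R ^+ 2)^-1
            = k%:R / (k.+1%:R ^+ 2 * k.+2%:R) :> R.
    by field; have k_ge0 := ler0n R k; rewrite !gt_eqF //; lra.
  by rewrite divr_ge0 // mulr_ge0 // sqr_ge0.
apply: le_trans (_ : _ <= \sum_(k < N) (2 / k.+1%:R - 2 / k.+2%:R)) _.
  by apply: ler_sum => k _; exact: step.
rewrite -(big_mkord xpredT (fun k => 2 / k.+1%:R - 2 / k.+2%:R)).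
rewrite (@telescope_sumr_eq _ 0 N (fun k => - (2 / k.+1%:R))) //.
  by rewrite divr1 opprK addrC gerBl divr_ge0.
by move=> k _; rewrite opprK addrC.
Qed.

Section BernoulliSLLN.
Context (R : realType) (dT : measure_display) (Omega : measurableType dT)
  (P : probability Omega R).
Variables (f : nat -> Omega -> bool) (p : R).
Hypothesis f_measurable : forall t, measurable [set w | f t w].
Hypothesis f_prob : forall t, P [set w | f t w] = p%:E.
Hypothesis f_indep : forall n (z : {ffun 'I_n -> bool}),
  fine (P (\big[setI/setT]_(t < n) [set w | f t w == z t]))
  = \prod_(t < n) fine (P [set w | f t w == z t]).

Lemma success_prob_ge0 : 0 <= p.
Proof. by rewrite -lee_fin -(f_prob 0) measure_ge0. Qed.

Lemma success_prob_le1 : p <= 1.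
Proof. by rewrite -lee_fin -(f_prob 0) probability_le1. Qed.

Definition cylinder n (z : {ffun 'I_n -> bool}) : set Omega :=
  \big[setI/setT]_(t < n) [set w | f t w == z t].

Lemma event_eqb t (b : bool) :
  [set w | f t w == b] = if b then [set w | f t w] else ~` [set w | f t w].
Proof. by case: b; apply/seteqP; split => w /=; case: (f t w). Qed.

Lemma measurable_cylinder n (z : {ffun 'I_n -> bool}) : measurable (cylinder z).
Proof.
apply: bigsetI_measurable => t _; rewrite event_eqb; case: (z t) => //.
exact: measurableC.
Qed.

Lemma prob_cylinder n (z : {ffun 'I_n -> bool}) :
  P (cylinder z) = (product_mass p z)%:E.
Proof.
rewrite -[P _]fineK ?(fin_num_measure P _ (measurable_cylinder z)) //.
congr EFin; rewrite /cylinder f_indep; apply: eq_bigr => t _.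
rewrite event_eqb /bernoulli_mass; case: (z t) => /=; first by rewrite f_prob.
by rewrite probability_setC // f_prob.
Qed.

Definition deviation_event n (eps : R) : set Omega :=
  \big[setU/set0]_(z : {ffun 'I_n -> bool} |
                   eps * n%:R <= `|\sum_(t < n) centered p (z t)|) cylinder z.

Lemma measurable_deviation_event n eps : measurable (deviation_event n eps).
Proof. by apply: bigsetU_measurable => z _; exact: measurable_cylinder. Qed.

Lemma prob_deviation_event_le n eps : 0 < eps -> (0 < n)%N ->
  (P (deviation_event n eps) <= (3 / eps ^+ 4 / n%:R ^+ 2)%:E)%E.
Proof.
move=> eps_gt0 n_gt0.
apply: le_trans (measure_big_setU_le _ _ (fun z _ => measurable_cylinder z)) _.
rewrite (eq_bigr (fun z => (product_mass p z)%:E)); last by move=> z _; exact: prob_cylinder.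
rewrite sumEFin lee_fin.
exact: deviation_mass_le success_prob_ge0 success_prob_le1 _ _ eps_gt0 n_gt0.
Qed.

Lemma in_deviation_event n eps w :
  eps * n%:R <= `|\sum_(t < n) centered p (f t w)| -> deviation_event n eps w.
Proof.
move=> dev; pose z := [ffun t : 'I_n => f t w].
rewrite /deviation_event (bigD1 z) /=; last by under eq_bigr do rewrite ffunE.
left; rewrite /cylinder; elim/big_ind: _ => // t _.
by rewrite /= ffunE.
Qed.

Lemma ae_near_deviation_lt eps : 0 < eps ->
  {ae P, forall w, \forall n \near \oo,
     `|\sum_(t < n) centered p (f t w)| < eps * n%:R}.
Proof.
move=> eps_gt0; pose F k := deviation_event k.+1 eps.
have F_meas k : measurable (F k) by exact: measurable_deviation_event.
pose c := 3 / eps ^+ 4.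
have summable : (\sum_(0 <= k <oo) P (F k) < +oo)%E.
  apply: (@le_lt_trans _ _ (c * 2)%:E); last exact: ltry.
  apply: lime_le.
    apply: ereal_nondecreasing_is_cvgn; apply: ereal_nondecreasing_series => k _ _.
    exact: measure_ge0.
  apply: nearW => N; apply: le_trans (_ : _ <= \sum_(0 <= k < N) (c / k.+1%:R ^+ 2)%:E)%E _.
    by apply: lee_sum => k _; exact: prob_deviation_event_le.
  rewrite sumEFin lee_fin -mulr_sumr big_mkord ler_pM2l ?sum_inv_sqr_le2 //.
  by rewrite divr_gt0 // exprn_gt0.
exists (lim_sup_set F); split.
- by apply: bigcap_measurable => // k _; exact: bigcup_measurable.
- exact: lim_sup_set_cvg0 summable.
move=> w /= not_near N _; apply: contrapT => never_after; apply: not_near.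
exists N.+1 => // [[|k]] //= /ltnSE Nk; rewrite ltNge; apply/negP => dev.
by apply: never_after; exists k => //; exact: in_deviation_event.
Qed.

Theorem bernoulli_slln :
  {ae P, forall w, (fun n => (\sum_(t < n) (f t w)%:R) / n%:R) @ \oo --> p}.
Proof.
have inv_gt0 m : 0 < (m.+1%:R : R)^-1 by rewrite invr_gt0.
apply: filterS (ae_foralln (fun m => ae_near_deviation_lt (inv_gt0 m))) => w close.
apply/cvgrPdist_lt => e e_gt0.
have [m _ /(_ m (leqnn m)) me] := near_infty_natSinv_lt (PosNum e_gt0).
near=> n.
have n_gt0 : 0 < n%:R :> R by rewrite ltr0n; near: n; exists 1%N.
have -> : p - (\sum_(t < n) (f t w)%:R) / n%:R
          = - ((\sum_(t < n) centered p (f t w)) / n%:R).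
  by rewrite sum_centered; field; rewrite gt_eqF.
rewrite normrN normrM [`|_^-1|]gtr0_norm ?invr_gt0 // ltr_pdivrMr //.
apply: (@lt_trans _ _ (m.+1%:R^-1 * n%:R)); last by rewrite ltr_pM2r.
by near: n; exact: close.
Unshelve. all: by end_near.
Qed.

End BernoulliSLLN.

Lemma det_mx22 (R : comPzRingType) (F : nat -> nat -> R) :
  \det (\matrix_(i < 2, j < 2) F i j) = F 0 0 * F 1 1 - F 0 1 * F 1 0.
Proof.
rewrite (expand_det_row _ ord0) !big_ord_recl big_ord0 /cofactor !det_mx11 !mxE /=.
by rewrite expr0 expr1; ring.
Qed.

Lemma det_mx33 (R : comPzRingType) (F : nat -> nat -> R) :
  \det (\matrix_(i < 3, j < 3) F i j) =
  F 0 0 * F 1 1 * F 2 2 - F 0 0 * F 1 2 * F 2 1 - F 0 1 * F 1 0 * F 2 2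
  + F 0 1 * F 1 2 * F 2 0 + F 0 2 * F 1 0 * F 2 1 - F 0 2 * F 1 1 * F 2 0.
Proof.
rewrite (expand_det_row _ ord0) !big_ord_recl big_ord0 /cofactor.
rewrite !(expand_det_row _ ord0) !big_ord_recl !big_ord0 /cofactor !det_mx11 !mxE /=.
by rewrite !expr0 !expr1 expr2; ring.
Qed.

Section PrincipalMinors.
Variables (R : comNzRingType) (d : nat) (K : 'M[R]_d).
Hypothesis K_sym : K^T = K.

Lemma K_symE i j : K i j = K j i.
Proof. by rewrite -[in LHS]K_sym mxE. Qed.

Definition minor3 (a b c : 'I_d) : R :=
  K a a * K b b * K c c + 2 * K a b * K b c * K a c
  - K a a * K b c ^+ 2 - K b b * K a c ^+ 2 - K c c * K a b ^+ 2.

Lemma principal_minor_enum (s : {set 'I_d}) :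
  exists m (h : 'I_m -> 'I_d), [/\ #|s| = m, injective h, forall a, h a \in s
    & principal_minor K s = \det (\matrix_(a, b) K (h a) (h b))].
Proof. by exists #|s|, enum_val; split; [| exact: enum_val_inj | exact: enum_valP |]. Qed.

Lemma principal_minor1 i : principal_minor K [set i] = K i i.
Proof.
have [m [h [sm _ h_in ->]]] := principal_minor_enum [set i].
rewrite cards1 in sm; subst m.
by rewrite det_mx11 mxE; have /set1P -> := h_in 0.
Qed.

(* The order in which [principal_minor] enumerates [s] is not explicit, so the
   proofs below examine every assignment of the elements of [s] to the rows. *)
Lemma principal_minor2 i j : i != j ->
  principal_minor K [set i; j] = K i i * K j j - K i j ^+ 2.
Proof.
move=> ij; have [m [h [sm h_inj h_in ->]]] := principal_minor_enum [set i; j].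
rewrite cards2 ij in sm; subst m.
have -> : \matrix_(a, b) K (h a) (h b) =
          \matrix_(a < 2, b < 2) K (h (inord a)) (h (inord b)).
  by apply/matrixP => a b; rewrite !mxE !inord_val.
rewrite (det_mx22 (fun x y => K (h (inord x)) (h (inord y)))).
have h01 : h (inord 0) != h (inord 1).
  by rewrite (inj_eq h_inj) -(inj_eq val_inj) /= !inordK.
move: h01 (h_in (inord 0)) (h_in (inord 1)); move: (h (inord 0)) (h (inord 1)) => u v.
rewrite !inE => uv /orP[] /eqP hu /orP[] /eqP hv; subst u v;
  rewrite ?eqxx // in uv; rewrite ?(K_symE j i); ring.
Qed.

Lemma principal_minor3 a b c : a != b -> a != c -> b != c ->
  principal_minor K [set a; b; c] = minor3 a b c.
Proof.
move=> ab ac bc; have [m [h [sm h_inj h_in ->]]] := principal_minor_enum [set a; b; c].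
rewrite finset.setUC cardsU1 cards2 ab !inE negb_or ![c == _]eq_sym ac bc in sm; subst m.
have -> : \matrix_(x, y) K (h x) (h y) =
          \matrix_(x < 3, y < 3) K (h (inord x)) (h (inord y)).
  by apply/matrixP => x y; rewrite !mxE !inord_val.
rewrite (det_mx33 (fun x y => K (h (inord x)) (h (inord y)))).
have h_neq k l : (k < l < 3)%N -> h (inord k) != h (inord l).
  by case/andP=> kl l3; rewrite (inj_eq h_inj) -(inj_eq val_inj) /= !inordK ?neq_ltn ?kl
     // (ltn_trans kl).
move: (h_neq 0 1 erefl) (h_neq 0 2 erefl) (h_neq 1 2 erefl).
move: (h_in (inord 0)) (h_in (inord 1)) (h_in (inord 2)).
move: (h (inord 0)) (h (inord 1)) (h (inord 2)) => u v x.
rewrite !inE -!orbA /minor3 => /or3P[] /eqP hu /or3P[] /eqP hv /or3P[] /eqP hx uv ux vx;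
  subst u v x; rewrite ?eqxx // in uv ux vx;
  rewrite ?(K_symE b a) ?(K_symE c a) ?(K_symE c b); ring.
Qed.

End PrincipalMinors.

Lemma near_sgr_cvg (R : realFieldType) (T : Type) (F : set_system T) {FF : Filter F}
    (u : T -> R) (l : R) :
  u @ F --> l -> l != 0 -> \forall t \near F, Num.sg (u t) = Num.sg l.
Proof.
move=> ul; case: ltrgtP => // [l_lt0|l_gt0] _.
  by apply: filterS (cvgr_lt _ ul _ l_lt0) => t ut; rewrite !ltr0_sg.
by apply: filterS (cvgr_gt _ ul _ l_gt0) => t ut; rewrite !gtr0_sg.
Qed.

Definition empirical_freq (R : fieldType) d (Omega : Type)
    (X : nat -> Omega -> 'I_d -> bool) (s : {set 'I_d}) (T : nat) (w : Omega) : R :=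
  (\sum_(t < T) [forall j in s, X t w j]%:R) / T%:R.

Section EmpiricalMoments.
Variables (R : realType) (d : nat) (Omega : Type) (X : nat -> Omega -> 'I_d -> bool).

Lemma mean1E T w i : mean1 R X T w i = empirical_freq R X [set i] T w.
Proof.
congr (_ / _); apply: eq_bigr => t _; congr ((nat_of_bool _)%:R).
by apply/idP/forall_inP => [x_i j /set1P->|]; last apply; rewrite ?set11.
Qed.

Lemma mean2E T w i j : mean2 R X T w i j = empirical_freq R X [set i; j] T w.
Proof.
congr (_ / _); apply: eq_bigr => t _; congr ((nat_of_bool _)%:R).
apply/andP/forall_inP => [[x_i x_j] k|x_ij]; first by rewrite !inE => /orP[] /eqP->.
by split; apply: x_ij; rewrite !inE eqxx ?orbT.
Qed.

Lemma mean3E T w a b c : mean3 R X T w a b c = empirical_freq R X [set a; b; c] T w.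
Proof.
congr (_ / _); apply: eq_bigr => t _; congr ((nat_of_bool _)%:R).
apply/and3P/forall_inP => [[x_a x_b x_c] k|x_abc].
  by rewrite !inE -!orbA => /or3P[] /eqP->.
by split; apply: x_abc; rewrite !inE eqxx ?orbT.
Qed.

End EmpiricalMoments.

Section EstimatorLimits.
Variables (R : realType) (d : nat) (Omega : Type) (X : nat -> Omega -> 'I_d -> bool).
Variables (w : Omega) (K : 'M[R]_d).
Hypothesis K_sym : K^T = K.
Hypothesis K_neq0 : forall i j, K i j != 0.
Hypothesis K_first_row_gt0 : forall i j : 'I_d, val i = 0%N -> val j != 0%N -> 0 < K i j.
Hypothesis freq_cvg : forall s : {set 'I_d},
  (fun T => empirical_freq R X s T w) @ \oo --> principal_minor K s.

Lemma mean1_cvg i : (fun T => mean1 R X T w i) @ \oo --> K i i.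
Proof. by rewrite -principal_minor1; under eq_fun do rewrite mean1E; exact: freq_cvg. Qed.

Lemma mean2_cvg i j : i != j ->
  (fun T => mean2 R X T w i j) @ \oo --> K i i * K j j - K i j ^+ 2.
Proof.
by move=> ij; rewrite -principal_minor2 //; under eq_fun do rewrite mean2E; exact: freq_cvg.
Qed.

Lemma mean3_cvg a b c : a != b -> a != c -> b != c ->
  (fun T => mean3 R X T w a b c) @ \oo --> minor3 K a b c.
Proof.
move=> ab ac bc; rewrite -principal_minor3 //.
by under eq_fun do rewrite mean3E; exact: freq_cvg.
Qed.

Lemma negcov_cvg i j : i != j -> (fun T => negcov R X T w i j) @ \oo --> K i j ^+ 2.
Proof.
move=> ij; have -> : K i j ^+ 2 = K i i * K j j - (K i i * K j j - K i j ^+ 2) by ring.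
by apply: cvgB; [apply: cvgM; exact: mean1_cvg | exact: mean2_cvg].
Qed.

Lemma absK_cvg i j : i != j -> (fun T => absK R X T w i j) @ \oo --> `|K i j|.
Proof.
move=> ij; rewrite -sqrtr_sqr.
exact: continuous_cvg (@sqrt_continuous R _) (negcov_cvg ij).
Qed.

Lemma sqr_absK_cvg i j : i != j ->
  (fun T => absK R X T w i j ^+ 2) @ \oo --> K i j ^+ 2.
Proof.
move=> ij; rewrite -real_normK ?num_real // expr2; under eq_fun do rewrite expr2.
exact: cvgM (absK_cvg ij) (absK_cvg ij).
Qed.

Lemma near_sgnhat (i0 i j : 'I_d) : i0 != i -> i0 != j -> i != j ->
  0 < K i0 i -> 0 < K i0 j ->
  \forall T \near \oo, sgnhat R X i0 T w i j = Num.sg (K i j).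
Proof.
move=> i0i i0j ij K0i_gt0 K0j_gt0.
have stat_cvg : (fun T => mean3 R X T w i0 i j
    - mean1 R X T w i0 * mean1 R X T w i * mean1 R X T w j
    + mean1 R X T w i0 * absK R X T w i j ^+ 2
    + mean1 R X T w i * absK R X T w i0 j ^+ 2
    + mean1 R X T w j * absK R X T w i0 i ^+ 2) @ \oo --> 2 * K i0 i * K i j * K i0 j.
  have -> : 2 * K i0 i * K i j * K i0 j = minor3 K i0 i j - K i0 i0 * K i i * K j j
      + K i0 i0 * K i j ^+ 2 + K i i * K i0 j ^+ 2 + K j j * K i0 i ^+ 2.
    by rewrite /minor3; ring.
  do 3![apply: cvgD; last by apply: cvgM; [exact: mean1_cvg | exact: sqr_absK_cvg]].
  apply: cvgB; first exact: mean3_cvg.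
  by apply: cvgM; [apply: cvgM |]; exact: mean1_cvg.
have stat_neq0 : 2 * K i0 i * K i j * K i0 j != 0 by rewrite !mulf_neq0 ?K_neq0.
apply: filterS (near_sgr_cvg stat_cvg stat_neq0) => T stat_sg.
rewrite /sgnhat stat_sg !sgrM (gtr0_sg (ltr0Sn R 1)) (gtr0_sg K0i_gt0).
by rewrite (gtr0_sg K0j_gt0) !mul1r mulr1.
Qed.

Lemma Kupper_cvg i j : (val i < val j)%N ->
  (fun T => Kupper R X T w i j) @ \oo --> K i j.
Proof.
move=> ij; have i_neq_j : i != j by apply: contraTneq ij => ->; rewrite ltnn.
have j_neq0 : val j != 0%N by rewrite -lt0n (leq_ltn_trans _ ij).
rewrite /Kupper; case: eqP => [i0|/eqP i_neq0].
  by rewrite -(gtr0_norm (K_first_row_gt0 i0 j_neq0)); exact: absK_cvg.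
set i0 := Ordinal _.
have i0i : i0 != i by rewrite -(inj_eq val_inj) eq_sym.
have i0j : i0 != j by rewrite -(inj_eq val_inj) eq_sym.
have near_sg := near_sgnhat i0i i0j i_neq_j (K_first_row_gt0 (i := i0) erefl i_neq0)
  (K_first_row_gt0 (i := i0) erefl j_neq0).
apply: cvg_trans (near_eq_cvg (f := fun T => Num.sg (K i j) * absK R X T w i j) _) _.
  by apply: filterS near_sg => T ->.
rewrite {2}(numEsg (K i j)); apply: cvgM; [exact: cvg_cst | exact: absK_cvg].
Qed.

Lemma Khat_cvg i j : (fun T => Khat R X T w i j) @ \oo --> K i j.
Proof.
under eq_fun do rewrite mxE.
case: eqVneq => [<-|ij]; first exact: mean1_cvg.
case: ltnP => [|ji]; first exact: Kupper_cvg.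
rewrite K_symE //; apply: Kupper_cvg.
by rewrite ltn_neqAle ji andbT (inj_eq val_inj) eq_sym.
Qed.

Lemma near_negcov_ge0 :
  \forall T \near \oo, forall i j : 'I_d, (val i < val j)%N -> 0 <= negcov R X T w i j.
Proof.
apply: filter_forall => i; apply: filter_forall => j.
have [ij|_] := ltnP (val i) (val j); last exact: nearW.
have i_neq_j : i != j by apply: contraTneq ij => ->; rewrite ltnn.
have sqr_neq0 : K i j ^+ 2 != 0 by rewrite sqrf_eq0 K_neq0.
apply: filterS (near_sgr_cvg (negcov_cvg i_neq_j) sqr_neq0) => T cov_sg _.
by rewrite -sgr_ge0 cov_sg sgr_ge0 sqr_ge0.
Qed.

Lemma near_sg_Khat :
  \forall T \near \oo, forall i j, Num.sg (Khat R X T w i j) = Num.sg (K i j).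
Proof.
apply: filter_forall => i; apply: filter_forall => j.
exact: near_sgr_cvg (@Khat_cvg i j) (K_neq0 i j).
Qed.

Lemma Khat_consistent :
  (forall i j, (fun T => Khat R X T w i j) @ \oo --> K i j) /\
  (\forall T \near \oo,
     (forall i j : 'I_d, (val i < val j)%N -> 0 <= negcov R X T w i j) /\
     (forall i j, Num.sg (Khat R X T w i j) = Num.sg (K i j))).
Proof.
split=> [i j|]; first exact: Khat_cvg.
by apply: filterS2 near_negcov_ge0 near_sg_Khat => T.
Qed.

End EstimatorLimits.

Lemma empirical_freq_ae_cvg (R : realType) (dT : measure_display)
    (Omega : measurableType dT) (P : probability Omega R) (d : nat) (K : 'M[R]_d)
    (X : nat -> Omega -> 'I_d -> bool) :
  (forall t i, measurable [set w | X t w i]) -> mutually_independent P X ->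
  (forall t, is_DPP P K (X t)) ->
  forall s : {set 'I_d},
    {ae P, forall w, (fun T => empirical_freq R X s T w) @ \oo --> principal_minor K s}.
Proof.
move=> X_meas X_indep X_dpp s; pose f t w := [forall j in s, X t w j].
have f_event t : [set w | f t w] = [set w | forall j, j \in s -> X t w j].
  by apply/seteqP; split => w /= /forall_inP.
apply: (bernoulli_slln (f := f)) => [t|t|n z].
- rewrite f_event (_ : [set w | _] = \bigcap_(j in [set j | j \in s]) [set w | X t w j]).
    by apply: fin_bigcap_measurable => // j _; exact: X_meas.
  by apply/seteqP; split => w /= all_s j; exact: all_s.
- by rewrite f_event X_dpp.
pose z_ext t := if insub t is Some o then z o else false.
have z_extE (t : 'I_n) : z_ext t = z t by rewrite /z_ext valK.
have := X_indep _ (fun t => [set y | [forall j in s, y j] == z_ext t]) (iota_uniq 0 n).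
rewrite (_ : iota 0 n = index_iota 0 n) ?big_mkord; last by rewrite /index_iota subn0.
under eq_bigr do rewrite z_extE; under [in RHS]eq_bigr do rewrite z_extE.
by move=> ->.
Qed.

Theorem proposition4 (R : realType) (dT : measure_display) (Omega : measurableType dT)
  (P : probability Omega R) (d : nat) (K0 : 'M[R]_d)
  (X : nat -> Omega -> 'I_d -> bool) :
  (3 <= d)%N ->
  K0^T = K0 ->
  (forall a : R, eigenvalue K0 a -> 0 < a < 1) ->
  (forall i j, K0 i j != 0) ->
  (forall i j : 'I_d, val i = 0%N -> val j != 0%N -> 0 < K0 i j) ->
  (forall t i, measurable [set w | X t w i]) ->
  mutually_independent P X ->
  (forall t, is_DPP P K0 (X t)) ->
  {ae P, forall w,
     (forall i j, (fun T : nat => Khat R X T w i j) @ \oo --> (K0 i j : R)) /\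
     (\forall T \near \oo,
        (forall i j : 'I_d, (val i < val j)%N -> 0 <= negcov R X T w i j) /\
        (forall i j, Num.sg (Khat R X T w i j) = Num.sg (K0 i j)))}.
Proof.
move=> _ K_sym _ K_neq0 K_first_row_gt0 X_meas X_indep X_dpp.
have : {ae P, forall w s,
    (fun T => empirical_freq R X s T w) @ \oo --> principal_minor K0 s}.
  by apply: filter_forall => s; exact: empirical_freq_ae_cvg.
apply: filterS => w freq_cvg.
exact: Khat_consistent K_sym K_neq0 K_first_row_gt0 freq_cvg.
Qed.
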